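(* Let $(t_j^i)_{0\le j\le i}$ be real numbers and let $h_{j,k}^i$ ($0\le k\le i$, $0\le j\le i-k$) be defined by $h_{j,0}^i=t_j^i$ and $h_{j,k}^i=h_{j,k-1}^{i-1}+h_{j,k-1}^{i}+h_{j+1,k-1}^{i}$ for $k\ge 1$. Then for any $0\leq k \leq i$, $0\leq j \leq i-k$, $$h^i_{j,k}=\sum_{r=0}^{k} \sum_{s=0}^{r} \binom{k}{s,\,k-r,\,r-s} t_{j+s}^{i-k+r}.$$
   Context: For non-negative integers $p,q,r$ with $p+q+r=n$, the tetrahedron trinomial coefficient is $\binom{n}{p,q,r}=\frac{n!}{p!\,q!\,r!}$. The numbers $t_j^i$ ($i,j\in\mathbb N$, $0\le j\le i$) form an arithmetical triangle $\mathcal T$ (rows $i$, columns $j$), and the $h_{j,k}^i$ form a tetrahedron $\mathcal H$ with face $\mathcal T$. *)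

From mathcomp Require Import all_boot all_order all_algebra.
Set Implicit Arguments. Unset Strict Implicit. Unset Printing Implicit Defensive.
Import Order.TTheory GRing.Theory Num.Theory.
Local Open Scope ring_scope.

Definition trinom (R : realFieldType) (n p q r : nat) : R :=
  (n`!)%:R / ((p`!)%:R * (q`!)%:R * (r`!)%:R).

(* t i j stands for t_j^i ; h t i j k stands for h_{j,k}^i.
   h_{j,0}^i = t_j^i ,  h_{j,k}^i = h_{j,k-1}^{i-1} + h_{j,k-1}^i + h_{j+1,k-1}^i. *)
Fixpoint h (R : realFieldType) (t : nat -> nat -> R) (i j k : nat) : R :=
  match k with
  | 0 => t i j
  | k'.+1 => h t i.-1 j k' + h t i j k' + h t i j.+1 k'
  end.

(* With the commuting shifts (A f) i j = f i.-1 j and (B f) i j = f i j.+1,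
   the recurrence reads h_k = (A + (1 + B)) h_(k-1), so h_k = (A + (1 + B))^k t.
   Expanding first binomially in A and 1 + B and then (1 + B)^r binomially
   gives the trinomial coefficients 'C(k, r) * 'C(r, s); each factor satisfies
   Pascal's rule, which is exactly the recurrence of h. *)

From mathcomp Require Import all_boot all_order all_algebra.
From mathcomp Require Import zify ring.
Import Order.TTheory GRing.Theory Num.Theory.
Local Open Scope ring_scope.

Lemma trinom_binomial (R : realFieldType) (k r s : nat) :
  (s <= r)%N -> (r <= k)%N ->
  trinom R k s (k - r) (r - s) = ('C(k, r) * 'C(r, s))%:R.
Proof.
move=> le_sr le_rk; rewrite /trinom -(bin_fact le_rk) -{1}(bin_fact le_sr) !natrM.
have fact_neq0 n : (n`!)%:R != 0 :> R by rewrite pnatr_eq0 -lt0n fact_gt0.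
by field; rewrite ?fact_neq0.
Qed.

Lemma sumrMn_binS (V : nmodType) (n : nat) (f : nat -> V) :
  \sum_(0 <= r < n.+2) f r *+ 'C(n.+1, r) =
  \sum_(0 <= r < n.+1) f r *+ 'C(n, r) + \sum_(0 <= r < n.+1) f r.+1 *+ 'C(n, r).
Proof.
rewrite big_nat_recl // [in RHS]big_nat_recl // !bin0 !mulr1n -addrA; congr (_ + _).
under eq_bigr do rewrite binS mulrnDr.
rewrite big_split /=; congr (_ + _).
by rewrite big_nat_recr //= bin_small // mulr0n addr0.
Qed.

Section TrinomialExpansion.

Context {V : nmodType} (t : nat -> nat -> V).

Definition shift_binom (r i j : nat) : V :=
  \sum_(0 <= s < r.+1) t i (j + s) *+ 'C(r, s).

(* Truncated subtraction [i - (k - r)] makes the expansion valid for every [i]. *)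
Definition trinom_expansion (k i j : nat) : V :=
  \sum_(0 <= r < k.+1) shift_binom r (i - (k - r)) j *+ 'C(k, r).

Lemma shift_binomS (r i j : nat) :
  shift_binom r.+1 i j = shift_binom r i j + shift_binom r i j.+1.
Proof.
rewrite /shift_binom sumrMn_binS; congr (_ + _).
by apply: eq_bigr => s _; rewrite addnS -addSn.
Qed.

Lemma trinom_expansionS (k i j : nat) :
  trinom_expansion k.+1 i j =
  trinom_expansion k i.-1 j + trinom_expansion k i j + trinom_expansion k i j.+1.
Proof.
rewrite /trinom_expansion sumrMn_binS -addrA; congr (_ + _).
  apply: eq_big_nat => r /andP[_ lt_rk]; congr (shift_binom _ _ _ *+ _); lia.
by rewrite -big_split; apply: eq_bigr => r _; rewrite subSS shift_binomS mulrnDl.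
Qed.

End TrinomialExpansion.

Lemma h_trinom_expansion (R : realFieldType) (t : nat -> nat -> R) (i j k : nat) :
  h t i j k = trinom_expansion t k i j.
Proof.
elim: k i j => [|k IHk] i j.
  by rewrite /trinom_expansion /shift_binom !big_nat1 !subn0 addn0 bin0 !mulr1n.
by rewrite trinom_expansionS /= !IHk.
Qed.

Theorem theorem1 (R : realFieldType) (t : nat -> nat -> R) (i j k : nat) :
  (k <= i)%N -> (j <= i - k)%N ->
  h t i j k =
  \sum_(0 <= r < k.+1) \sum_(0 <= s < r.+1)
     trinom R k s (k - r) (r - s) * t (i - k + r)%N (j + s)%N.
Proof.
move=> le_ki _; rewrite h_trinom_expansion.
apply: eq_big_nat => r /andP[_ lt_rk]; rewrite -sumrMnl.
apply: eq_big_nat => s /andP[_ lt_sr].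
by rewrite trinom_binomial // mulr_natl -mulrnA mulnC subnBA // addnBAC.
Qed.
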